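(* $$\sum_{n=0}^{\infty}\frac{(-1)^{m_n}}{c(n)}=\frac12 .$$
   Context: For $n\ge 0$, $c(n)=\sum_{i=0}^{n}\left(\binom{n}{i}\bmod 2\right)2^{i}$, the integer whose binary digits form the $n$-th row of Pascal's triangle modulo $2$. $(m_n)_{n\ge0}$ is the Thue–Morse sequence: $m_n\equiv s(n)\pmod 2$, where $s(n)$ is the number of $1$'s in the binary expansion of $n$. *)

From mathcomp Require Import all_boot.
From Stdlib Require Import Reals.

Definition c (n : nat) : nat := (\sum_(i < n.+1) ('C(n, i) %% 2) * 2 ^ i)%N.

(* s(n) = number of 1's in the binary expansion of n; bit i of n is (n / 2^i) mod 2,
   and all bits of index > n vanish since 2^i > n. *)
Definition s (n : nat) : nat := (\sum_(i < n.+1) (n %/ 2 ^ i) %% 2)%N.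

Definition m (n : nat) : nat := (s n %% 2)%N.

(* For r < 2^K, row 2^K + r of Pascal's triangle mod 2 is row r followed, 2^K places
   later, by a second copy of row r; so c(2^K + r) = (2^(2^K) + 1) c(r), while
   s(2^K + r) = s(r) + 1.  Hence the terms with index in [2^K, 2^(K+1)) are those with
   index in [0, 2^K) multiplied by -1/(2^(2^K) + 1), and the partial sum up to 2^K is
   the telescoping product X/(2(X - 1)), X = 2^(2^K), which tends to 1/2.  As the n-th
   term is at most 2^-n in absolute value, this determines the sum of the series. *)

From mathcomp Require Import all_boot.
From Stdlib Require Import Reals Lra.
(* Reals rebinds [^] on nat to [Nat.pow], which is what [c] and [s] are stated with. *)
Import ssrnat.

Lemma Nat_powE a b : Nat.pow a b = a ^ b.
Proof. by elim: b => // b IHb; rewrite expnS /= IHb. Qed.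

Lemma odd_bin_pow2 K j : odd 'C(2 ^ K, j) = (j == 0) || (j == 2 ^ K).
Proof.
have [-> | j_gt0] := posnP j; first by rewrite bin0.
rewrite /=; case: ltngtP => [ltjK | ltKj | ->]; last by rewrite binn.
- apply/negP => oddC.
  have : 2 ^ K %| j * 'C(2 ^ K, j).
    by case: j j_gt0 {ltjK oddC} => // j _; rewrite -mul_bin_diag dvdn_mulr.
  rewrite Gauss_dvdl; last by rewrite coprimeXl // coprime2n.
  by move/(dvdn_leq j_gt0); rewrite leqNgt ltjK.
- by rewrite bin_small.
Qed.

(* Mod 2, (1 + X)^(2^K + n) = (1 + X^(2^K)) (1 + X)^n, and n < 2^K keeps the two halves apart. *)
Lemma odd_bin_pow2D K n i : n < 2 ^ K ->
  odd 'C(2 ^ K + n, i) = odd 'C(n, i) (+) ((2 ^ K <= i) && odd 'C(n, i - 2 ^ K)).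
Proof.
move=> ltnK; rewrite -Vandermonde (big_morph odd oddD (erefl : odd 0 = false)).
rewrite big_ord_recl bin0 mul1n subn0; congr (_ (+) _).
under eq_bigr do rewrite lift0 oddM odd_bin_pow2 /=.
rewrite -big_mkcond /=.
have [leKi | ltiK] := leqP (2 ^ K) i.
- have ltKi : (2 ^ K).-1 < i by rewrite prednK ?expn_gt0.
  rewrite (big_pred1 (Ordinal ltKi)) /= ?prednK ?expn_gt0 // => j.
  by rewrite /= -val_eqE /=; apply/eqP/eqP => [<- | ->] //; rewrite prednK ?expn_gt0.
- rewrite big_pred0 // => j; apply/negbTE; rewrite neq_ltn.
  by rewrite (leq_ltn_trans (ltn_ord j) ltiK).
Qed.

Lemma big_ord_widen0 {a b} (F : nat -> nat) : a <= b -> (forall i, a <= i -> F i = 0) ->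
  \sum_(i < b) F i = \sum_(i < a) F i.
Proof.
move=> leab F0; rewrite (big_ord_widen b F leab) [RHS]big_mkcond /=.
by apply: eq_bigr => i _; case: ltnP => // /F0.
Qed.

Lemma cE n B : n < B -> c n = \sum_(i < B) odd 'C(n, i) * 2 ^ i.
Proof.
move=> ltnB; rewrite (big_ord_widen0 (fun i => odd 'C(n, i) * 2 ^ i) ltnB) => [|i ltni].
  by apply: eq_bigr => i _; rewrite modn2 Nat_powE.
by rewrite bin_small.
Qed.

Lemma sE n B : n < B -> s n = \sum_(i < B) odd (n %/ 2 ^ i).
Proof.
move=> ltnB; rewrite (big_ord_widen0 (fun i => odd (n %/ 2 ^ i) : nat) ltnB) => [|i ltni].
  by apply: eq_bigr => i _; rewrite modn2 Nat_powE.
by rewrite divn_small // (leq_trans ltni) // ltnW // ltn_expl.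
Qed.

Lemma c_pow2D K n : n < 2 ^ K -> c (2 ^ K + n) = (2 ^ 2 ^ K + 1) * c n.
Proof.
move=> ltnK; rewrite (cE _ (2 ^ K + n.+1)); last by rewrite addnS.
rewrite big_split_ord /=.
rewrite mulnDl mul1n [RHS]addnC [X in _ = X + _](cE _ _ ltnK) (cE n n.+1) // big_distrr /=.
congr (_ + _); apply: eq_bigr => i _; rewrite odd_bin_pow2D //.
- by rewrite leqNgt ltn_ord addbF.
- rewrite leq_addr subDnCA // subnn addn0 bin_small ?ltn_addr //.
  by rewrite expnD mulnCA.
Qed.

Lemma odd_divn_pow2D K n i : n < 2 ^ K ->
  odd ((2 ^ K + n) %/ 2 ^ i) = odd (n %/ 2 ^ i) + (i == K) :> nat.
Proof.
move=> ltnK; case: (ltngtP i K) => [ltiK | ltKi | ->].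
- rewrite -(subnK (ltnW ltiK)) expnD divnMDl ?expn_gt0 // oddD oddX subn_eq0.
  by rewrite leqNgt ltiK addn0.
- have ltKin : 2 ^ K + n < 2 ^ i.
    by rewrite (leq_trans _ (leq_pexp2l _ ltKi)) // expnS mul2n -addnn ltn_add2l.
  by rewrite !divn_small // (leq_ltn_trans (leq_addl _ _) ltKin).
- by rewrite -{1}(mul1n (2 ^ K)) divnMDl ?expn_gt0 // divn_small.
Qed.

Lemma s_pow2D K n : n < 2 ^ K -> s (2 ^ K + n) = (s n).+1.
Proof.
move=> ltnK; have ltKB : K < 2 ^ K + n.+1 by rewrite ltn_addr // ltn_expl.
rewrite (sE _ (2 ^ K + n.+1)); last by rewrite addnS.
rewrite (sE n (2 ^ K + n.+1)); last by rewrite ltn_addl.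
under eq_bigr do rewrite odd_divn_pow2D //.
rewrite big_split /= -[RHS]addn1; congr (_ + _).
rewrite (bigD1 (Ordinal ltKB)) //= eqxx big1 // => j.
by rewrite -val_eqE /= => /negbTE ->.
Qed.

Lemma pow2_le_c n : 2 ^ n <= c n.
Proof. by rewrite (cE n n.+1) // big_ord_recr /= binn mul1n leq_addl. Qed.

Open Scope R_scope.

Definition tm_term (n : nat) : R := (-1) ^ m n / INR (c n).

Fixpoint partial_sum (g : nat -> R) (N : nat) : R :=
  if N is k.+1 then partial_sum g k + g k else 0.

Lemma partial_sumD g a b :
  partial_sum g (a + b) = partial_sum g a + partial_sum (fun n => g (a + n)%N) b.
Proof. by elim: b => [|b IHb] /=; rewrite ?addn0 ?addnS /= ?IHb; lra. Qed.

Lemma eq_partial_sum g h N : (forall n, (n < N)%N -> g n = h n) ->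
  partial_sum g N = partial_sum h N.
Proof.
elim: N => [|N IHN] gh //=.
by rewrite IHN ?gh // => n ltnN; apply: gh; apply: ltnW.
Qed.

Lemma partial_sumZ g k N : partial_sum (fun n => k * g n) N = k * partial_sum g N.
Proof. by elim: N => [|N IHN] /=; rewrite ?IHN; lra. Qed.

Lemma sum_f_R0_partial_sum g n : sum_f_R0 g n = partial_sum g n.+1.
Proof. by elim: n => [|n IHn] /=; rewrite ?IHn //; lra. Qed.

Lemma pow_neg1 k : (-1) ^ k = if odd k then -1 else 1.
Proof. by elim: k => [|k IHk] //=; rewrite IHk; case: (odd k) => /=; lra. Qed.

Lemma INR_expn2 e : INR (2 ^ e) = 2 ^ e.
Proof. by rewrite -Nat_powE pow_INR /=; congr (_ ^ _); lra. Qed.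

Lemma pow2_gt0 e : 0 < 2 ^ e.
Proof. by apply: pow_lt; lra. Qed.

Lemma pow2_ge2 e : (0 < e)%N -> 2 <= 2 ^ e.
Proof. by move=> e_gt0; rewrite -{1}(pow_1 2); apply: Rle_pow; [lra | apply/leP]. Qed.

Lemma c_gt0 n : 0 < INR (c n).
Proof. by apply/lt_0_INR/ltP; rewrite (leq_trans _ (pow2_le_c n)) ?expn_gt0. Qed.

Lemma tm_term_pow2D K n : (n < 2 ^ K)%N ->
  tm_term (2 ^ K + n) = - / (2 ^ 2 ^ K + 1) * tm_term n.
Proof.
move=> ltnK; rewrite /tm_term /m s_pow2D // c_pow2D // mult_INR plus_INR INR_expn2.
rewrite !pow_neg1 !modn2 /=; have := c_gt0 n; have := pow2_gt0 (2 ^ K).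
by case: (odd (s n)) => /= *; field; lra.
Qed.

Lemma Rabs_tm_term n : Rabs (tm_term n) <= / 2 ^ n.
Proof.
rewrite /tm_term /Rdiv Rabs_mult pow_1_abs Rabs_inv Rabs_pos_eq ?Rmult_1_l; last exact: pos_INR.
apply: Rinv_le_contravar; first exact: pow2_gt0.
by rewrite -INR_expn2; apply/le_INR/leP/pow2_le_c.
Qed.

Lemma tm_term0 : tm_term 0 = 1.
Proof. by rewrite /tm_term /m /s /c !big_ord1 /=; lra. Qed.

Lemma partial_sum_tm_term_pow2 K :
  partial_sum tm_term (2 ^ K) = 2 ^ 2 ^ K / (2 * (2 ^ 2 ^ K - 1)).
Proof.
elim: K => [|K IHK]; first by rewrite /= tm_term0; field.
have X_ge2 : 2 <= 2 ^ 2 ^ K by apply: pow2_ge2; rewrite expn_gt0.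
rewrite expnS mul2n -addnn partial_sumD pow_add IHK.
under eq_partial_sum => n ltnK do rewrite tm_term_pow2D //.
by rewrite partial_sumZ IHK; field; split; nra.
Qed.

Lemma partial_sum_tail g N k : (forall n, Rabs (g n) <= / 2 ^ n) ->
  Rabs (partial_sum g (N + k) - partial_sum g N) <= 2 / 2 ^ N - 2 / 2 ^ (N + k).
Proof.
move=> g_le; elim: k => [|k IHk]; first by rewrite addn0 Rminus_diag Rabs_R0; lra.
rewrite addnS /=; have := g_le (N + k)%N; have := pow2_gt0 (N + k).
have -> : partial_sum g (N + k) + g (N + k)%N - partial_sum g N =
  (partial_sum g (N + k) - partial_sum g N) + g (N + k)%N by lra.
move: (Rabs_triang (partial_sum g (N + k) - partial_sum g N) (g (N + k)%N)).
rewrite /Rdiv Rinv_mult; lra.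
Qed.

Lemma partial_sum_tm_term_approx M : Rabs (partial_sum tm_term M - 1 / 2) <= 3 / 2 ^ M.
Proof.
have leM : (M <= 2 ^ M)%N by rewrite ltnW // ltn_expl.
have tail := partial_sum_tail tm_term M (2 ^ M - M) Rabs_tm_term.
rewrite subnKC // Rabs_minus_sym in tail.
have head : Rabs (partial_sum tm_term (2 ^ M) - 1 / 2) <= / 2 ^ M.
  have X_ge : 2 ^ M <= 2 ^ 2 ^ M by apply: Rle_pow; [lra | apply/leP].
  have X_ge2 : 2 <= 2 ^ 2 ^ M by apply: pow2_ge2; rewrite expn_gt0.
  rewrite partial_sum_tm_term_pow2 (_ : _ / _ - _ = / (2 * (2 ^ 2 ^ M - 1))); last by field; lra.
  rewrite Rabs_pos_eq; last by apply/Rlt_le/Rinv_0_lt_compat; lra.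
  by apply: Rinv_le_contravar; [exact: pow2_gt0 | lra].
have := Rinv_0_lt_compat _ (pow2_gt0 (2 ^ M)).
have := R_dist_tri (partial_sum tm_term M) (1 / 2) (partial_sum tm_term (2 ^ M)).
by rewrite /R_dist /Rdiv in tail head * => *; lra.
Qed.

Theorem mainTheorem16 :
  infinite_sum (fun n : nat => ((-1) ^ (m n) / INR (c n))%R) (1 / 2)%R.
Proof.
move=> eps eps_gt0.
have half_lt1 : Rabs (/ 2) < 1 by rewrite Rabs_pos_eq; lra.
have [N smallN] := pow_lt_1_zero (/ 2) half_lt1 (eps / 3) ltac:(lra).
exists N => n leNn; rewrite /R_dist -/tm_term sum_f_R0_partial_sum.
have := smallN n.+1 (le_S _ _ leNn).
rewrite pow_inv Rabs_pos_eq; last exact/Rlt_le/Rinv_0_lt_compat/pow2_gt0.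
have := partial_sum_tm_term_approx n.+1; rewrite /Rdiv; lra.
Qed.
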